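(* Let $n\ge3$ and $1\le l\le n$, and put $\alpha^{(n)}_l=2\cos\frac{l\pi}{n+1}$. If $l$ is odd, then \[ \Phi_n(\alpha^{(n)}_l)=16\cos^2\frac{l\pi}{2(n+1)}>0. \] If $l$ is even, then $\Phi_n(\alpha^{(n)}_l)=0$ and \[ \Phi_n'(\alpha^{(n)}_l)=K^{(n)}_l\Big(\cos\frac{l\pi}{n+1}+\frac{n}{n+2}\Big)\neq0,\qquad K^{(n)}_l=\frac{2(n+1)(n+2)\big(1-\cos\frac{l\pi}{n+1}\big)}{\sin^2\frac{l\pi}{n+1}}>0. \]
   Context: $U_n$ is the Chebyshev polynomial of the second kind, $U_n(\cos\theta)=\sin((n+1)\theta)/\sin\theta$, $\tilde U_n(x)=U_n(x/2)$, and $\Phi_n(x)=((n+1)x^2-6x-4n)\tilde U_n(x)+2(x+2)\tilde U_{n-1}(x)+2(x+2)$. *)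

From HB Require Import structures.
From mathcomp Require Import all_boot all_order all_algebra.
From mathcomp Require Import reals trigo.
Set Implicit Arguments. Unset Strict Implicit. Unset Printing Implicit Defensive.
Import Order.TTheory GRing.Theory Num.Theory.
Local Open Scope ring_scope.

(* Chebyshev polynomials of the second kind:
   U_0 = 1, U_1 = 2X, U_{n+2} = 2X U_{n+1} - U_n,
   so that U_n(cos t) = sin((n+1)t)/sin t. *)
Fixpoint chebU_pair {R : nzRingType} (n : nat) : {poly R} * {poly R} :=
  match n with
  | 0 => (1, 'X *+ 2)
  | m.+1 => let: (a, b) := chebU_pair m in (b, 'X *+ 2 * b - a)
  end.

Definition chebU {R : nzRingType} (n : nat) : {poly R} := (chebU_pair n).1.

Definition chebUt {R : fieldType} (n : nat) : {poly R} :=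
  chebU n \Po ((2%:R)^-1 *: 'X).

Definition Phi {R : fieldType} (n : nat) : {poly R} :=
  ((n.+1)%:R *: 'X^2 - 6%:R *: 'X - (4 * n)%:R%:P) * chebUt n
  + (2%:R *: ('X + 2%:R%:P)) * chebUt n.-1
  + 2%:R *: ('X + 2%:R%:P).

From HB Require Import structures.
From mathcomp Require Import all_boot all_order all_algebra.
From mathcomp Require Import reals trigo.
From mathcomp Require Import ring lra zify.
Set Implicit Arguments. Unset Strict Implicit. Unset Printing Implicit Defensive.
Import Order.TTheory GRing.Theory Num.Theory.
Local Open Scope ring_scope.

(* Put t = l pi / (n + 1) and c = cos t.  From U_k(cos t) sin t = sin ((k + 1) t)
   we get U_n(c) = 0 and U_(n-1)(c) = (-1)^(l+1), so Phi_n(2c) = 4 (c + 1) (1 + U_(n-1)(c)).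
   The derivatives U_n'(c), U_(n-1)'(c) are eliminated with
   (1 - x^2) U_k' = (k + 2) x U_k - (k + 1) U_(k+1); for even l this leaves
   Phi_n'(2c) = 2 (n + 1) ((n + 2) c + n) / (1 + c).  It does not vanish: otherwise
   -2n / (n + 2) would be a rational, hence integral, root of the monic integer
   polynomial ~U_n, yet it lies strictly between -2 and -1.  Integrality of rational
   roots is seen on the integer b^k U_k(a / 2b), which is congruent to a^k mod b. *)

Section ChebyshevRing.
Variable R : comNzRingType.
Implicit Types (k : nat) (y : R).

Lemma chebU0 : chebU 0 = 1 :> {poly R}. Proof. by []. Qed.

Lemma chebU1 : chebU 1 = 'X *+ 2 :> {poly R}. Proof. by []. Qed.

Lemma chebU_pairE k : chebU_pair k = (chebU k, chebU k.+1) :> {poly R} * {poly R}.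
Proof. by elim: k => [//|k IH]; rewrite [LHS]/= IH /chebU /= IH. Qed.

Lemma chebUSS k : chebU k.+2 = 'X *+ 2 * chebU k.+1 - chebU k :> {poly R}.
Proof. by rewrite {1}/chebU /= chebU_pairE. Qed.

Lemma deriv_chebU k y :
  (1 - y ^+ 2) * (chebU k)^`().[y]
  = (k.+2)%:R * y * (chebU k).[y] - (k.+1)%:R * (chebU k.+1).[y].
Proof.
suff /(_ k)[] : forall j,
  (1 - y ^+ 2) * (chebU j)^`().[y]
    = (j.+2)%:R * y * (chebU j).[y] - (j.+1)%:R * (chebU j.+1).[y] /\
  (1 - y ^+ 2) * (chebU j.+1)^`().[y]
    = (j.+3)%:R * y * (chebU j.+1).[y] - (j.+2)%:R * (chebU j.+2).[y] by [].
elim=> [|j [IH0 IH1]].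
  by rewrite chebUSS chebU1 chebU0 !derivE !hornerE; split; ring.
split=> //; rewrite !chebUSS !derivE !hornerE.
have -> : forall v du dv : R, (1 - y ^+ 2) * ((1 + 1) * v + (y + y) * dv - du)
    = 2 * (1 - y ^+ 2) * v + 2 * y * ((1 - y ^+ 2) * dv) - (1 - y ^+ 2) * du.
  by move=> *; ring.
by rewrite IH0 IH1 chebUSS !hornerE; ring.
Qed.
End ChebyshevRing.

Fixpoint chebU_homog (a b : int) (k : nat) : int :=
  match k with
  | 0 => 1
  | 1 => a
  | (k1.+1 as k2).+1 => a * chebU_homog a b k2 - b ^+ 2 * chebU_homog a b k1
  end.

Lemma chebU_homogE (R : comNzRingType) (a b : int) (y : R) k :
  2 * y * b%:~R = a%:~R -> (chebU_homog a b k)%:~R = b%:~R ^+ k * (chebU k).[y].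
Proof.
move=> yb; suff /(_ k)[] : forall j,
    (chebU_homog a b j)%:~R = b%:~R ^+ j * (chebU j).[y] /\
    (chebU_homog a b j.+1)%:~R = b%:~R ^+ j.+1 * (chebU j.+1).[y] by [].
elim=> [|j [IH0 IH1]].
  by rewrite chebU1 chebU0 !hornerE -yb; split; ring.
split=> //; rewrite [chebU_homog _ _ _]/= chebUSS !hornerE intrB !intrM IH0 IH1 -yb.
by rewrite !exprS; ring.
Qed.

Lemma chebU_homog_mod (a b : int) k : (b %| chebU_homog a b k - a ^+ k)%Z.
Proof.
suff /(_ k)[] : forall j, (b %| chebU_homog a b j - a ^+ j)%Z /\
    (b %| chebU_homog a b j.+1 - a ^+ j.+1)%Z by [].
elim=> [|j [IH0 IH1]]; first by rewrite !subrr dvdz0.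
split=> //; rewrite [chebU_homog _ _ _]/=.
have -> : a * chebU_homog a b j.+1 - b ^+ 2 * chebU_homog a b j - a ^+ j.+2
    = a * (chebU_homog a b j.+1 - a ^+ j.+1) - b * (b * chebU_homog a b j).
  by rewrite !exprS; ring.
by apply: rpredB; [apply: dvdz_mull | apply/dvdz_mulr/dvdzz].
Qed.

Section PhiAtDouble.
Variable R : numFieldType.
Implicit Types (k n : nat) (y : R).

Lemma horner_chebUt_double k y : (chebUt k).[2 * y] = (chebU k).[y].
Proof. by rewrite /chebUt horner_comp hornerZ hornerX mulKf ?pnatr_eq0. Qed.

Lemma deriv_chebUt_double k y : (chebUt k)^`().[2 * y] = (chebU k)^`().[y] / 2.
Proof.
rewrite /chebUt deriv_comp derivZ derivX hornerM horner_comp !hornerZ hornerX hornerC.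
by rewrite mulKf ?pnatr_eq0 // mulr1.
Qed.

Lemma horner_Phi_double n y :
  (Phi n).[2 * y] = 4 * (((n.+1)%:R * y ^+ 2 - 3 * y - n%:R) * (chebU n).[y]
                         + (y + 1) * ((chebU n.-1).[y] + 1)).
Proof.
rewrite !(hornerD, hornerM, hornerZ, hornerN, hornerC, hornerX, hornerXn) /=.
rewrite !horner_chebUt_double natrM; ring.
Qed.

Lemma deriv_Phi_double n y :
  (Phi n)^`().[2 * y] = 2 * ((2 * (n.+1)%:R * y - 3) * (chebU n).[y]
    + ((n.+1)%:R * y ^+ 2 - 3 * y - n%:R) * (chebU n)^`().[y]
    + (chebU n.-1).[y] + (y + 1) * (chebU n.-1)^`().[y] + 1).
Proof.
rewrite /Phi !(derivD, derivM, derivZ, derivB, derivC, derivX, derivXn, derivN).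
rewrite !(hornerD, hornerM, hornerZ, hornerN, hornerC, hornerX, hornerXn, hornerMn) /=.
rewrite !horner_chebUt_double !deriv_chebUt_double natrM.
by field.
Qed.
End PhiAtDouble.

Lemma chebUt_root_ratr_int (R : numFieldType) k (q : rat) :
  (chebUt k).[ratr q : R] = 0 -> q \is a Num.int.
Proof.
move=> Uq; set a := numq q; set b := denq q.
have b0 : b%:~R != 0 :> R by rewrite intr_eq0 denq_neq0.
have ab : 2 * (ratr q / 2) * b%:~R = a%:~R :> R by rewrite /ratr; field; rewrite b0.
have homog0 : chebU_homog a b k = 0.
  apply/eqP; rewrite -(intr_eq0 R) (chebU_homogE _ ab) -horner_chebUt_double.
  have -> : 2 * (ratr q / 2) = ratr q :> R by field.
  by rewrite Uq mulr0.
have := chebU_homog_mod a b k; rewrite homog0 sub0r rpredN dvdzE abszX => dvd_b.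
have /(coprime_dvdl dvd_b) : coprime (`|a| ^ k) `|b| by rewrite coprimeXl ?coprime_num_den.
rewrite /coprime gcdnn Qint_def => /eqP b1.
by rewrite -[denq q]gez0_abs ?ltW ?denq_gt0 // -/b b1.
Qed.

Lemma chebU_root_neq_neg_ratio (R : numFieldType) k n (y : R) :
  (2 < n)%N -> (chebU k).[y] = 0 -> y + n%:R / (n.+2)%:R != 0.
Proof.
move=> n_gt2 Uy; apply/negP => /eqP yE.
set q : rat := - (2 * n)%:R / (n.+2)%:R.
have qy : ratr q = 2 * y :> R.
  have -> : y = - (n%:R / (n.+2)%:R) by apply/eqP; rewrite -addr_eq0 yE.
  by rewrite fmorph_div rmorphN /= !ratr_nat natrM; field; rewrite -natrD pnatr_eq0.
have Uq : (chebUt k).[ratr q : R] = 0 by rewrite qy horner_chebUt_double.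
have /intrP[z qz] := chebUt_root_ratr_int Uq.
have : (z * (n.+2)%:Z)%:~R = (- (2 * n)%:Z)%:~R :> rat.
  by rewrite intrM -qz /q divfK ?pnatr_eq0 // rmorphN.
move/intr_inj => zE.
have : (z + 2) * (n.+2)%:Z = 4 by rewrite mulrDl zE; lia.
by have [|] := lerP (z + 2) 0; nia.
Qed.

Section PhiAtChebURoot.
Variables (R : numFieldType) (m : nat) (y : R).
Hypothesis Uy : (chebU m.+1).[y] = 0.

Lemma horner_Phi_double_at_root :
  (Phi m.+1).[2 * y] = 4 * (y + 1) * ((chebU m).[y] + 1).
Proof. by rewrite horner_Phi_double Uy /=; ring. Qed.

Hypothesis y2_neq1 : y ^+ 2 != 1.

Lemma deriv_Phi_double_at_root :
  (Phi m.+1)^`().[2 * y] = 2 * (1 + (chebU m).[y]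
    * (1 - (m.+2)%:R * ((m.+3)%:R * y + (m.+1)%:R) / (1 + y))).
Proof.
have s0 : 1 - y ^+ 2 != 0 by rewrite subr_eq0 eq_sym.
have y1 : 1 + y != 0.
  by apply: contraNneq y2_neq1 => /eqP; rewrite addrC addr_eq0 => /eqP ->; rewrite sqrrN expr1n.
have dU1 : (1 - y ^+ 2) * (chebU m.+1)^`().[y] = (m.+2)%:R * (chebU m).[y].
  by rewrite deriv_chebU chebUSS !hornerE Uy; ring.
have dU0 : (1 - y ^+ 2) * (chebU m)^`().[y] = (m.+2)%:R * y * (chebU m).[y].
  by rewrite deriv_chebU Uy; ring.
rewrite deriv_Phi_double Uy /= -[(chebU m.+1)^`().[y]](mulKf s0) dU1.
rewrite -[(chebU m)^`().[y]](mulKf s0) dU0.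
by field; rewrite s0 y1.
Qed.
End PhiAtChebURoot.

Section ChebyshevTrig.
Variable R : realType.

Lemma chebU_cos k (t : R) : (chebU k).[cos t] * sin t = sin ((k.+1)%:R * t).
Proof.
suff /(_ k)[] : forall j, (chebU j).[cos t] * sin t = sin ((j.+1)%:R * t) /\
    (chebU j.+1).[cos t] * sin t = sin ((j.+2)%:R * t) by [].
elim=> [|j [IH0 IH1]].
  rewrite chebU1 chebU0 !hornerE; split=> //.
  have -> : 2 * t = t + t by ring.
  by rewrite sinD; ring.
split=> //; rewrite chebUSS !hornerE.
have -> : (j.+3)%:R * t = (j.+2)%:R * t + t by ring.
have t1 : (j.+1)%:R * t = (j.+2)%:R * t - t by ring.
rewrite t1 sinB in IH0; rewrite sinD.
have -> : forall u v : R, ((cos t + cos t) * v - u) * sin t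
    = (cos t + cos t) * (v * sin t) - u * sin t by move=> *; ring.
by rewrite IH0 IH1; ring.
Qed.

Lemma sin_natr_mulpi l : sin (l%:R * pi) = 0 :> R.
Proof. by elim: l => [|l IH]; rewrite ?mul0r ?sin0 // mulrSr mulrDl mul1r sinDpi IH oppr0. Qed.

Lemma cos_natr_mulpi l : cos (l%:R * pi) = (-1) ^+ l :> R.
Proof. by elim: l => [|l IH]; rewrite ?mul0r ?cos0 // mulrSr mulrDl mul1r cosDpi IH exprS mulN1r. Qed.

Variables (m l : nat) (t : R).
Hypotheses (mt : (m.+2)%:R * t = l%:R * pi) (sin_t : sin t != 0).

Lemma chebU_cos_root : (chebU m.+1).[cos t] = 0.
Proof. by apply: (mulIf sin_t); rewrite chebU_cos mt sin_natr_mulpi mul0r. Qed.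

Lemma chebU_cos_root_prev : (chebU m).[cos t] = - (-1) ^+ l.
Proof.
apply: (mulIf sin_t); rewrite chebU_cos.
have -> : (m.+1)%:R * t = l%:R * pi - t by rewrite -mt; ring.
by rewrite sinB sin_natr_mulpi cos_natr_mulpi; ring.
Qed.
End ChebyshevTrig.

Theorem lemma4p11 (R : realType) (n l : nat) :
  (3 <= n)%N -> (1 <= l <= n)%N ->
  let c : R := cos (l%:R * pi / (n.+1)%:R) in
  let alpha : R := 2 * c in
  (odd l ->
     (Phi n).[alpha] = 16 * cos (l%:R * pi / (2 * (n.+1)%:R)) ^+ 2
     /\ 0 < (Phi n).[alpha]) /\
  (~~ odd l ->
     let K : R := 2 * (n.+1)%:R * (n.+2)%:R * (1 - c)
                  / sin (l%:R * pi / (n.+1)%:R) ^+ 2 in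
     (Phi n).[alpha] = 0
     /\ (Phi n)^`().[alpha] = K * (c + n%:R / (n.+2)%:R)
     /\ (Phi n)^`().[alpha] != 0
     /\ 0 < K).
Proof.
case: n => [//|m] m_gt1 /andP[l_gt0 l_le].
set t := l%:R * pi / (m.+2)%:R => c alpha.
have mt : (m.+2)%:R * t = l%:R * pi by rewrite /t mulrC divfK ?pnatr_eq0.
have sin_t : 0 < sin t.
  apply: sin_gt0_pi; rewrite divr_gt0 ?mulr_gt0 ?ltr0n ?pi_gt0 //=.
  by rewrite ltr_pdivrMr ?ltr0n // [_ * pi]mulrC ltr_pM2l ?pi_gt0 // ltr_nat ltnS.
have Uc : (chebU m.+1).[c] = 0 := chebU_cos_root mt (lt0r_neq0 sin_t).
have Um : (chebU m).[c] = - (-1) ^+ l := chebU_cos_root_prev mt (lt0r_neq0 sin_t).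
have sin2 : sin t ^+ 2 = 1 - c ^+ 2 := sin2cos2 t.
have c2_lt1 : c ^+ 2 < 1 by rewrite -subr_gt0 -sin2 exprn_gt0.
have c_gtN1 : -1 < c by nra.
have c_lt1 : c < 1 by nra.
have c_neqN1 : 1 + c != 0 by apply: lt0r_neq0; lra.
split=> [l_odd | l_even K].
  have -> : (Phi m.+1).[alpha] = 8 * (1 + c).
    by rewrite horner_Phi_double_at_root // Um -signr_odd l_odd; ring.
  have t_half : t = (l%:R * pi / (2 * (m.+2)%:R)) *+ 2.
    by rewrite /t; field; rewrite -natrD pnatr_eq0.
  by split; [rewrite /c t_half cos_mulr2n; ring | lra].
have sign_l : (-1) ^+ l = 1 :> R by rewrite -signr_odd (negbTE l_even).
have K_gt0 : 0 < K.
  by rewrite /K divr_gt0 ?exprn_gt0 ?mulr_gt0 ?ltr0n ?subr_gt0.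
have dPhi : (Phi m.+1)^`().[alpha] = K * (c + (m.+1)%:R / (m.+3)%:R).
  rewrite deriv_Phi_double_at_root ?lt_eqF // Um sign_l /K -/t sin2.
  by field; rewrite -natrD pnatr_eq0 -sin2 c_neqN1 lt0r_neq0 ?exprn_gt0.
split; first by rewrite horner_Phi_double_at_root // Um sign_l; ring.
split; [exact: dPhi | split=> //].
by rewrite dPhi mulf_neq0 ?(lt0r_neq0 K_gt0) ?(chebU_root_neq_neg_ratio m_gt1 Uc).
Qed.
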